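(* Assume that for every $y\in\mathcal Y$ the map $u\mapsto\ell(y,u)$ is convex and twice continuously differentiable, and that for every $y$ the map $u\mapsto s(y,u)$ is $\gamma$-Lipschitz continuous for some $\gamma\in(0,\infty)$. Then for every $y\in\mathcal Y$, $$|S_{\lambda;D^y}(X_i,Y_i)-\tilde S_{\lambda;D^y}(X_i,Y_i)|\le\tau^{(1)}_{\lambda;i}(y)\ (1\le i\le n),\qquad |S_{\lambda;D^y}(X_{n+1},y)-\tilde S_{\lambda;D^y}(X_{n+1},y)|\le\tau^{(1)}_{\lambda;n+1}(y),$$ where for every $i\in\{1,\dots,n+1\}$, $\tau^{(1)}_{\lambda;i}(y)=\sqrt{K_{i,i}}\sqrt{K_{n+1,n+1}}\frac{\gamma\rho^{(1)}_\lambda(y)}{\lambda(n+1)}$ with $\rho^{(1)}_\lambda(y)=\frac12\big|-\partial_2\ell(z,\hat f_{\lambda;D^z}(X_{n+1}))+\partial_2\ell(y,\hat f_{\lambda;D^z}(X_{n+1}))\big|$.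
   Context: Let $\mathcal X\subset\mathbb R^d$, $\mathcal Y\subset\mathbb R$, $D=\{(X_1,Y_1),\dots,(X_n,Y_n)\}$ i.i.d. with distribution $P$ on $\mathcal X\times\mathcal Y$, $(X_{n+1},Y_{n+1})\sim P$ independent. For $y\in\mathcal Y$, $D^y=D\cup\{(X_{n+1},y)\}$. $\mathcal H$ is an RKHS of functions $\mathcal X\to\mathbb R$ with kernel $\kappa_{\mathcal H}$; $K=(\kappa_{\mathcal H}(X_i,X_j))_{1\le i,j\le n+1}$. For a loss $\ell$ and $\lambda>0$, $\hat f_{\lambda;D^y}$ minimizes $\frac1{n+1}\sum_{(x,y')\in D^y}\ell(y',f(x))+\lambda\|f\|^2_{\mathcal H}$ over $\mathcal H$. For $s:\mathcal Y\times\mathcal Y\to\mathbb R_+$: $S_{\lambda;D^y}(X_i,Y_i)=s(Y_i,\hat f_{\lambda;D^y}(X_i))$ ($i\le n$), $S_{\lambda;D^y}(X_{n+1},y)=s(y,\hat f_{\lambda;D^y}(X_{n+1}))$. A point $z\in\mathcal Y$ is fixed and $\tilde S_{\lambda;D^y}(X_i,Y_i)=s(Y_i,\hat f_{\lambda;D^z}(X_i))$ ($i\le n$), $\tilde S_{\lambda;D^y}(X_{n+1},y)=s(y,\hat f_{\lambda;D^z}(X_{n+1}))$. $\partial_2\ell$ is the derivative in the second argument. *)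

From HB Require Import structures.
From mathcomp Require Import all_boot all_order all_algebra.
From mathcomp Require Import all_classical all_reals all_analysis.
Set Implicit Arguments. Unset Strict Implicit. Unset Printing Implicit Defensive.
Import Order.TTheory GRing.Theory Num.Theory.
Import numFieldNormedType.Exports.
Local Open Scope classical_set_scope.
Local Open Scope ring_scope.

Definition is_inner_product (R : realType) (V : lmodType R) (ip : V -> V -> R) :=
  [/\ (forall u v, ip u v = ip v u),
      (forall a u v w, ip (a *: u + v) w = a * ip u w + ip v w),
      (forall u, 0 <= ip u u) &
      (forall u, ip u u = 0 -> u = 0)].

(* Completeness w.r.t. the norm sqrt(ip u u) (Cauchy sequences converge);
   stated with the squared norm. *)
Definition ip_complete (R : realType) (V : lmodType R) (ip : V -> V -> R) :=
  forall u : nat -> V,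
    (forall e : R, 0 < e -> exists N : nat, forall m p : nat, (N <= m)%N -> (N <= p)%N ->
        ip (u m - u p) (u m - u p) < e) ->
    exists l : V, forall e : R, 0 < e -> exists N : nat, forall m : nat, (N <= m)%N ->
        ip (u m - l) (u m - l) < e.

(* A reproducing kernel Hilbert space of real functions on the set calX of a type X:
   a Hilbert space V whose elements are (injectively) real functions on calX,
   evaluation being linear, with reproducing kernel sections kx x in V such that
   f x = <f, kx x> for x in calX. *)
Record RKHS (R : realType) (X : Type) (calX : set X) := {
  rk_V :> lmodType R;
  rk_ip : rk_V -> rk_V -> R;
  rk_eval : rk_V -> X -> R;
  rk_sec : X -> rk_V;
  rk_ip_ok : is_inner_product rk_ip;
  rk_complete : ip_complete rk_ip;
  rk_eval_lin : forall a f g x, rk_eval (a *: f + g) x = a * rk_eval f x + rk_eval g x;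
  rk_eval_inj : forall f g, (forall x, calX x -> rk_eval f x = rk_eval g x) -> f = g;
  rk_reprod : forall f x, calX x -> rk_eval f x = rk_ip f (rk_sec x)
}.

Definition rk_kernel (R : realType) (X : Type) (calX : set X) (H : RKHS R calX)
  (x x' : X) : R := rk_ip (rk_sec H x) (rk_sec H x').

(* Augmented labels of D^y: index i < n gives Y_i, index n (= X_{n+1}) gives y. *)
Definition augY (R : realType) (n : nat) (Ys : 'I_n -> R) (y : R) (i : 'I_n.+1) : R :=
  match ltnP i n with
  | LtnNotGeq h => Ys (Ordinal h)
  | _ => y
  end.

Definition reg_risk (R : realType) (X : Type) (calX : set X) (H : RKHS R calX)
  (l : R -> R -> R) (lam : R) (n : nat) (Xs : 'I_n.+1 -> X) (Ys : 'I_n -> R) (y : R)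
  (f : H) : R :=
  (n.+1%:R)^-1 * (\sum_(i < n.+1) l (augY Ys y i) (rk_eval f (Xs i)))
  + lam * rk_ip f f.

Definition is_minimizer (R : realType) (X : Type) (calX : set X) (H : RKHS R calX)
  (l : R -> R -> R) (lam : R) (n : nat) (Xs : 'I_n.+1 -> X) (Ys : 'I_n -> R) (y : R)
  (f : H) : Prop :=
  forall g : H, reg_risk l lam Xs Ys y f <= reg_risk l lam Xs Ys y g.

Definition convex_fun (R : realType) (g : R -> R) : Prop :=
  forall a b t : R, 0 <= t <= 1 -> g (t * a + (1 - t) * b) <= t * g a + (1 - t) * g b.

Definition C2 (R : realType) (g : R -> R) : Prop :=
  (forall u : R, derivable g u 1) /\ (forall u : R, derivable (derive1 g) u 1) /\
  continuous (derive1 (derive1 g)).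

Definition d2 (R : realType) (l : R -> R -> R) (y u : R) : R := derive1 (l y) u.

From HB Require Import structures.
From mathcomp Require Import all_boot all_order all_algebra.
From mathcomp Require Import all_classical all_reals all_analysis.
From mathcomp Require Import ring lra.
Import Order.TTheory GRing.Theory Num.Theory.
Import numFieldNormedType.Exports.
Local Open Scope classical_set_scope.
Local Open Scope ring_scope.

(* Let h := f_y - f_z, let R_w be the regularized risk with label w at X_{n+1}
   and DR_w its directional derivative.  Convexity of the losses gives the
   strong-convexity inequality R_w(g) >= R_w(f) + DR_w(f)(g - f) + lam ||g - f||^2.
   Adding its instances at (f_z, f_y) and (f_y, f_z) for w = y, and using the
   first-order conditions DR_y(f_y) = 0 and DR_z(f_z) = 0 (the labels y and z
   differ only in the last summand), yields
     2 lam ||h||^2 <= |d2 l y - d2 l z|(f_z(X_{n+1})) |h(X_{n+1})| / (n+1).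
   By the reproducing property and Cauchy-Schwarz, |h(x)| <= ||h|| sqrt(K(x,x)),
   so ||h|| <= rho sqrt(K_{n+1,n+1}) / (lam (n+1)); the Lipschitz property of s
   then bounds the change of every score by gam |h(X_i)|. *)

Lemma is_derive_comp_line {R : realType} (g : R -> R) (a b t : R) :
  derivable g (a + t * b) 1 ->
  is_derive t 1 (fun s => g (a + s * b)) (derive1 g (a + t * b) * b).
Proof.
move=> dg.
have dline : is_derive t 1 (fun s : R => a + s * b) b.
  by apply: is_derive_eq; rewrite add0r mul1r scaler0 add0r; exact: mulr1.
have dlineb : derivable (fun s : R => a + s * b) t 1 by case: dline.
apply: DeriveDef.
  by apply/derivable1_diffP; apply: differentiable_comp; apply/derivable1_diffP.
by rewrite -derive1E (derive1_comp dlineb dg) [derive1 _ t]derive1E derive_val.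
Qed.

Lemma is_derive_quadratic {R : realType} (A B C t : R) :
  is_derive t 1 (fun s : R => A + s * B + s ^+ 2 * C) (B + 2 * t * C).
Proof.
apply: is_derive_eq; rewrite add0r mul1r !scaler0 !add0r.
rewrite -[B%:A]/(B * 1) -[t%:A]/(t * 1) -[C *: _]/(C * _); ring.
Qed.

Lemma is_derive_le_right_slope {R : realType} (phi : R -> R) (d C : R) :
  is_derive (0 : R) (1 : R) phi d -> (forall t, 0 < t <= 1 -> phi t - phi 0 <= t * C) ->
  d <= C.
Proof.
move=> dphi slope; have phi_derivable : derivable phi 0 1 by case: dphi.
rewrite -(@derive_val _ _ _ _ _ _ _ dphi) ['D_1 phi 0]cvg_at_rightE //.
apply: limr_le.
  rewrite -(cvg_at_rightE (fun h : R => h^-1 *: ((phi \o shift 0) (h *: 1) - phi 0))) //.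
  apply: cvg_trans phi_derivable; apply: cvg_app.
  move=> A [e e_gt0 Ae]; exists e => // x xe x_gt0; apply: Ae => //.
  exact/lt0r_neq0.
near=> h.
have h_gt0 : 0 < h by near: h; exists 1 => [|t _] //=; exact: ltr01.
have h_le1 : h <= 1.
  near: h; exists 1 => [|h /=]; first exact: ltr01.
  by rewrite distrC subr0 => /(le_lt_trans (ler_norm _)) /ltW.
rewrite /= [_ *: 1]mulr1 /shift /= addr0 -[_ *: _]/(_ * _).
by rewrite ler_pdivrMl // slope // h_gt0.
Unshelve. all: by end_near.
Qed.

Lemma convex_tangent_le {R : realType} (g : R -> R) (a b : R) :
  convex_fun g -> derivable g a 1 -> g a + derive1 g a * (b - a) <= g b.
Proof.
move=> g_convex g_derivable.
pose phi t := g (a + t * (b - a)).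
have dphi : is_derive (0 : R) (1 : R) phi (derive1 g a * (b - a)).
  by have := @is_derive_comp_line _ g a (b - a) 0; rewrite mul0r addr0; apply.
suff : derive1 g a * (b - a) <= g b - g a by lra.
apply: (@is_derive_le_right_slope _ phi _ (g b - g a) dphi) => t /andP[t_gt0 t_le1].
have := g_convex b a t; rewrite (ltW t_gt0) t_le1 => /(_ isT).
rewrite /phi mul0r addr0 (_ : t * b + (1 - t) * a = a + t * (b - a)); last by ring.
lra.
Qed.

Section InnerProduct.
Context {R : realType} {V : lmodType R} {ip : V -> V -> R}.
Hypothesis ipP : is_inner_product ip.

Lemma ipC (u v : V) : ip u v = ip v u.
Proof. by case: ipP. Qed.

Lemma ipDZl a (u v w : V) : ip (a *: u + v) w = a * ip u w + ip v w.
Proof. by case: ipP. Qed.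

Lemma ip_ge0 (u : V) : 0 <= ip u u.
Proof. by case: ipP. Qed.

Lemma ip_eq0 {u : V} : ip u u = 0 -> u = 0.
Proof. by case: ipP => _ _ _; apply. Qed.

Lemma ip0l (w : V) : ip 0 w = 0.
Proof. by have := ipDZl 1 0 0 w; rewrite scaler0 addr0 mul1r; lra. Qed.

Lemma ipZl a (u w : V) : ip (a *: u) w = a * ip u w.
Proof. by have := ipDZl a u 0 w; rewrite !addr0 ip0l addr0. Qed.

Lemma ipDl (u v w : V) : ip (u + v) w = ip u w + ip v w.
Proof. by have := ipDZl 1 u v w; rewrite scale1r mul1r. Qed.

Lemma ipNl (u w : V) : ip (- u) w = - ip u w.
Proof. by rewrite -scaleN1r ipZl mulN1r. Qed.

Lemma ipNN (u : V) : ip (- u) (- u) = ip u u.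
Proof. by rewrite ipNl ipC ipNl opprK. Qed.

Lemma ip_line (f v : V) t :
  ip (f + t *: v) (f + t *: v) = ip f f + t * (2 * ip f v) + t ^+ 2 * ip v v.
Proof.
rewrite !ipDl !ipZl (ipC f (f + _)) (ipC v (f + _)) !ipDl !ipZl (ipC v f).
ring.
Qed.

Lemma ip_CauchySchwarz (u v : V) :
  `|ip u v| <= Num.sqrt (ip u u) * Num.sqrt (ip v v).
Proof.
have [vv0|vv_neq0] := eqVneq (ip v v) 0.
  by rewrite (ip_eq0 vv0) ipC ip0l normr0 mulr_ge0 ?sqrtr_ge0.
have vv_gt0 : 0 < ip v v by rewrite lt_def vv_neq0 ip_ge0.
have sq_le : ip u v ^+ 2 <= ip u u * ip v v.
  (* expand 0 <= <w, w> for w = <v, v> u - <u, v> v *)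
  have := ip_ge0 (ip v v *: u + (- ip u v) *: v).
  rewrite ip_line !ipZl (ipC u (_ *: u)) ipZl.
  have -> : ip v v * (ip v v * ip u u) + - ip u v * (2 * (ip v v * ip u v)) +
      (- ip u v) ^+ 2 * ip v v = ip v v * (ip u u * ip v v - ip u v ^+ 2) by ring.
  by rewrite pmulr_rge0 // subr_ge0.
by rewrite -sqrtrM ?ip_ge0 // -sqrtr_sqr ler_sqrt // mulr_ge0 ?ip_ge0.
Qed.

End InnerProduct.

Section ReproducingKernel.
Context {R : realType} {X : Type} {calX : set X} {H : RKHS R calX}.
Local Notation ip := (@rk_ip R X calX H).
Local Notation ev := (@rk_eval R X calX H).

Lemma rk_evalDZ (f v : H) t x : ev (f + t *: v) x = ev f x + t * ev v x.
Proof. by rewrite addrC rk_eval_lin addrC. Qed.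

Lemma rk_evalB (f g : H) x : ev (f - g) x = ev f x - ev g x.
Proof. by have := rk_evalDZ f g (-1) x; rewrite scaleN1r mulN1r. Qed.

Lemma rk_eval_norm_le (f : H) {x} : calX x ->
  `|ev f x| <= Num.sqrt (ip f f) * Num.sqrt (rk_kernel H x x).
Proof. by move=> Xx; rewrite rk_reprod // ip_CauchySchwarz //; apply: rk_ip_ok. Qed.

End ReproducingKernel.

Lemma augY_widen (R : realType) n (Ys : 'I_n -> R) w (i : 'I_n) :
  augY Ys w (widen_ord (leqnSn n) i) = Ys i.
Proof.
rewrite /augY; case: ltnP => [h|h]; first by congr Ys; apply: val_inj.
by move: h; rewrite /= leqNgt ltn_ord.
Qed.

Lemma augY_max (R : realType) n (Ys : 'I_n -> R) w : augY Ys w ord_max = w.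
Proof. by rewrite /augY; case: ltnP => //= h; exfalso; move: h; rewrite ltnn. Qed.

Lemma augY_in {R : realType} {calY : set R} {n} {Ys : 'I_n -> R} {w} :
  calY w -> (forall i, calY (Ys i)) -> forall i, calY (augY Ys w i).
Proof. by move=> Yw YYs i; rewrite /augY; case: ltnP. Qed.

Section RegularizedRisk.
Context {R : realType} {X : Type} {calX : set X} {H : RKHS R calX}.
Context {l : R -> R -> R} {lam : R} {n : nat} {Xs : 'I_n.+1 -> X} {Ys : 'I_n -> R}.
Local Notation ip := (@rk_ip R X calX H).
Local Notation ev := (@rk_eval R X calX H).
Local Notation risk := (reg_risk l lam Xs Ys).
Local Notation c := (n.+1%:R^-1 : R).

Let ipP : is_inner_product ip := rk_ip_ok H.

Definition reg_risk_dir (w : R) (f v : H) : R :=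
  c * (\sum_(i < n.+1) d2 l (augY Ys w i) (ev f (Xs i)) * ev v (Xs i))
  + lam * (2 * ip f v).

Lemma reg_risk_line w (f v : H) t :
  risk w (f + t *: v) =
  c * (\sum_(i < n.+1) l (augY Ys w i) (ev f (Xs i) + t * ev v (Xs i)))
  + lam * (ip f f + t * (2 * ip f v) + t ^+ 2 * ip v v).
Proof.
rewrite /reg_risk ip_line //; congr (_ * _ + _).
by apply: eq_bigr => i _; rewrite rk_evalDZ.
Qed.

Lemma reg_risk_strong_convex w (f g : H) :
  (forall i, convex_fun (l (augY Ys w i))) ->
  (forall i u, derivable (l (augY Ys w i)) u 1) ->
  risk w f + reg_risk_dir w f (g - f) + lam * ip (g - f) (g - f) <= risk w g.
Proof.
move=> l_convex l_derivable.
have -> : risk w g = risk w (f + 1 *: (g - f)) by rewrite scale1r addrC subrK.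
rewrite reg_risk_line /reg_risk /reg_risk_dir expr1n !mul1r.
set h := g - f.
have tangent_sum :
    \sum_(i < n.+1) l (augY Ys w i) (ev f (Xs i)) +
    \sum_(i < n.+1) d2 l (augY Ys w i) (ev f (Xs i)) * ev h (Xs i) <=
    \sum_(i < n.+1) l (augY Ys w i) (ev f (Xs i) + 1 * ev h (Xs i)).
  rewrite -big_split /=; apply: ler_sum => i _; rewrite mul1r.
  have := @convex_tangent_le _ _ _ (ev f (Xs i) + ev h (Xs i))
    (l_convex i) (l_derivable i (ev f (Xs i))).
  by rewrite [_ + ev h _]addrC addrK.
have c_ge0 : 0 <= c by rewrite invr_ge0 ler0n.
have := ler_wpM2l c_ge0 tangent_sum; rewrite mulrDr => tangent_risk.
set c0 := n.+1%:R^-1 in tangent_risk *; lra.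
Qed.

Lemma minimizer_reg_risk_dir_eq0 {w} {f : H} (v : H) :
  (forall i u, derivable (l (augY Ys w i)) u 1) ->
  is_minimizer l lam Xs Ys w f -> reg_risk_dir w f v = 0.
Proof.
move=> l_derivable f_min.
pose a i := ev f (Xs i); pose b i := ev v (Xs i).
pose psi t := c * (\sum_(i < n.+1) l (augY Ys w i) (a i + t * b i))
   + lam * (ip f f + t * (2 * ip f v) + t ^+ 2 * ip v v).
have dpsi (t : R) : is_derive t 1 psi
   (c * (\sum_(i < n.+1) derive1 (l (augY Ys w i)) (a i + t * b i) * b i)
    + lam * (2 * ip f v + 2 * t * ip v v)).
  have dsum := is_derive_sum (fun i => @is_derive_comp_line _ _ (a i) (b i) t
    (l_derivable i (a i + t * b i))).
  rewrite fct_sumE in dsum.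
  exact: is_deriveD (is_deriveZ c dsum) (is_deriveZ lam (is_derive_quadratic _ _ _ t)).
have psi_min : is_derive (0 : R) (1 : R) psi 0.
  apply: (@derive1_at_min _ psi (-1) 1 0); first lra.
  - by move=> t _; case: (dpsi t).
  - by rewrite in_itv /= ltrN10 ltr01.
  - move=> t _; rewrite /psi -!reg_risk_line.
    by rewrite scale0r addr0; exact: f_min.
have := derive_val (is_derive := psi_min); rewrite (derive_val (is_derive := dpsi 0)).
move=> <-; rewrite /reg_risk_dir /d2 mulr0 mul0r !addr0.
by under [in RHS]eq_bigr => i _ do rewrite mul0r addr0.
Qed.

Lemma reg_risk_dir_relabel y z (f v : H) :
  reg_risk_dir y f v - reg_risk_dir z f v =
  c * ((d2 l y (ev f (Xs ord_max)) - d2 l z (ev f (Xs ord_max))) * ev v (Xs ord_max)).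
Proof.
rewrite /reg_risk_dir !big_ord_recr /= !augY_max.
under eq_bigr => i _ do rewrite augY_widen.
under [X in _ - (_ * (X + _) + _)]eq_bigr => i _ do rewrite augY_widen.
ring.
Qed.

Lemma minimizer_relabel_sqr_le {y z} {fy fz : H} :
  (forall i, convex_fun (l (augY Ys y i))) ->
  (forall i u, derivable (l (augY Ys y i)) u 1) ->
  (forall i u, derivable (l (augY Ys z i)) u 1) ->
  is_minimizer l lam Xs Ys y fy -> is_minimizer l lam Xs Ys z fz ->
  2 * lam * ip (fy - fz) (fy - fz) <=
  - (c * ((d2 l y (ev fz (Xs ord_max)) - d2 l z (ev fz (Xs ord_max)))
          * ev (fy - fz) (Xs ord_max))).
Proof.
move=> y_convex y_derivable z_derivable fy_min fz_min.
have from_fz := reg_risk_strong_convex y fz fy y_convex y_derivable.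
have from_fy := reg_risk_strong_convex y fy fz y_convex y_derivable.
rewrite (minimizer_reg_risk_dir_eq0 _ y_derivable fy_min) -opprB ipNN // in from_fy.
have := reg_risk_dir_relabel y z fz (fy - fz).
rewrite (minimizer_reg_risk_dir_eq0 _ z_derivable fz_min) subr0 => dir_y.
rewrite dir_y in from_fz.
set c0 := n.+1%:R^-1 in from_fz *; set N := ip (fy - fz) _ in from_fy from_fz *; lra.
Qed.

Lemma minimizer_relabel_norm_le {y z} {fy fz : H} :
  (forall i, convex_fun (l (augY Ys y i))) ->
  (forall i u, derivable (l (augY Ys y i)) u 1) ->
  (forall i u, derivable (l (augY Ys z i)) u 1) ->
  is_minimizer l lam Xs Ys y fy -> is_minimizer l lam Xs Ys z fz ->
  calX (Xs ord_max) ->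
  2 * lam * Num.sqrt (ip (fy - fz) (fy - fz)) <=
  c * `|d2 l y (ev fz (Xs ord_max)) - d2 l z (ev fz (Xs ord_max))|
    * Num.sqrt (rk_kernel H (Xs ord_max) (Xs ord_max)).
Proof.
move=> y_convex y_derivable z_derivable fy_min fz_min Xmax.
have sqr_le := minimizer_relabel_sqr_le y_convex y_derivable z_derivable fy_min fz_min.
set N := Num.sqrt _; set D := `|_ - _|; set K := Num.sqrt _.
have N_ge0 : 0 <= N by apply: sqrtr_ge0.
have cDK_ge0 : 0 <= c * D * K.
  by rewrite mulr_ge0 ?sqrtr_ge0 // mulr_ge0 ?normr_ge0 // invr_ge0 ler0n.
have : 2 * lam * N * N <= c * D * K * N.
  rewrite -mulrA -expr2 sqr_sqrtr ?ip_ge0 //; apply: le_trans sqr_le _.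
  apply: le_trans (ler_norm _) _; rewrite normrN !normrM ger0_norm ?invr_ge0 //.
  rewrite -!mulrA !ler_wpM2l ?invr_ge0 ?normr_ge0 //.
  by rewrite mulrC rk_eval_norm_le.
have [-> _|N_neq0] := eqVneq N 0; first by rewrite mulr0.
by rewrite ler_pM2r // lt_def N_neq0.
Qed.

End RegularizedRisk.

Theorem theorem13 (R : realType) (d : nat) (calX : set 'rV[R]_d) (calY : set R)
  (H : RKHS R calX) (l s : R -> R -> R) (gam lam : R) (n : nat)
  (Xs : 'I_n.+1 -> 'rV[R]_d) (Ys : 'I_n -> R) (z : R) :
  (forall i, calX (Xs i)) -> (forall i, calY (Ys i)) -> calY z ->
  0 < lam ->
  (forall y u, 0 <= s y u) ->
  (forall y, calY y -> convex_fun (l y) /\ C2 (l y)) ->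
  0 < gam ->
  (forall y, calY y -> forall u v, `|s y u - s y v| <= gam * `|u - v|) ->
  forall (y : R), calY y ->
  forall (fy fz : H),
    is_minimizer l lam Xs Ys y fy ->
    is_minimizer l lam Xs Ys z fz ->
  let xn1 := Xs ord_max in
  let rho := 2^-1 * `|- d2 l z (rk_eval fz xn1) + d2 l y (rk_eval fz xn1)| in
  forall i : 'I_n.+1,
    `|s (augY Ys y i) (rk_eval fy (Xs i)) - s (augY Ys y i) (rk_eval fz (Xs i))|
    <= Num.sqrt (rk_kernel H (Xs i) (Xs i)) * Num.sqrt (rk_kernel H xn1 xn1)
       * (gam * rho / (lam * n.+1%:R)).
Proof.
move=> Xs_in Ys_in Yz lam_gt0 _ l_reg gam_gt0 s_lip y Yy fy fz fy_min fz_min xn1 rho i.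
have l_convex w : calY w -> forall j, convex_fun (l (augY Ys w j)).
  by move=> Yw j; case: (l_reg _ (augY_in Yw Ys_in j)).
have l_derivable w : calY w -> forall j u, derivable (l (augY Ys w j)) u 1.
  by move=> Yw j u; case: (l_reg _ (augY_in Yw Ys_in j)) => _ [].
have := minimizer_relabel_norm_le (l_convex _ Yy) (l_derivable _ Yy) (l_derivable _ Yz)
  fy_min fz_min (Xs_in ord_max).
have D_eq : `|d2 l y (rk_eval fz xn1) - d2 l z (rk_eval fz xn1)| = 2 * rho.
  by rewrite /rho mulrA divff ?mul1r ?pnatr_eq0 // addrC.
rewrite D_eq => norm_le.
have := rk_eval_norm_le (fy - fz) (Xs_in i); rewrite rk_evalB => eval_le.
apply: le_trans (s_lip _ (augY_in Yy Ys_in i) _ _) _.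
apply: le_trans (ler_wpM2l (ltW gam_gt0) eval_le) _.
rewrite -/xn1 in norm_le.
set N := Num.sqrt _ in norm_le eval_le *.
set Ki := Num.sqrt (rk_kernel H (Xs i) (Xs i)); set Kn := Num.sqrt _ in norm_le *.
have N_le : N <= n.+1%:R^-1 * rho * Kn / lam.
  by rewrite ler_pdivlMr //; set c := n.+1%:R^-1 in norm_le *; lra.
rewrite (mulrC N) mulrA.
have -> : Ki * Kn * (gam * rho / (lam * n.+1%:R)) =
    gam * Ki * (n.+1%:R^-1 * rho * Kn / lam) by rewrite invfM; ring.
by apply: ler_wpM2l N_le; rewrite mulr_ge0 ?sqrtr_ge0 ?ltW.
Qed.
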